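(* Let $\mathcal{N}=(N,M_0)$ be a two-level PT-net system with transitions partitioned into low-level $L$ and high-level $H$. Then $\mathcal{N}$ has the property BNDC if and only if for all reachable markings $M_1$ of $N\setminus H$ and $M_2$ of $N$ (from $M_0$), $M_1\,R\,M_2$ implies $\mathcal{L}(N\setminus H,M_1)=\mathcal{L}(N\setminus H,M_2)$.
   Context: A PT-net is $N=(P,T,F)$ with $P,T$ finite disjoint and $F:(P\times T)\cup(T\times P)\to\mathbb{N}$; markings $M:P\to\mathbb{N}$; $t$ enabled at $M$ ($M[t\rangle$) iff $M(p)\ge F(p,t)$ for all $p$, firing gives $M'(p)=M(p)+F(t,p)-F(p,t)$; extended to sequences. $N\setminus H$ deletes the transitions of $H$. $\mathcal{L}(N\setminus H,M)$ is the set of all $s\in L^*$ with $M[s\rangle$ in $N\setminus H$. For systems with disjoint place sets, $\mathcal{N}_1|\mathcal{N}_2$ has the union of places, the union of transitions (shared transitions synchronize, arcs inherited from each component on its own places), and union of initial markings. A high-level net system has only high-level transitions. Transitions in $L$ are observable, those in $H$ unobservable; weak bisimilarity $\approx$ is the existence of a relation between reachable markings containing the initial pair such that, for related $(M,M')$ and symmetrically, an observable step $M[l\rangle$ is matched by unobservable steps, $l$, unobservable steps leading to a related pair, and an unobservable step is matched by unobservable steps leading to a related pair. BNDC: for every high-level net system $\mathcal{N}'$ (places disjoint from those of $\mathcal{N}$) with transition set $H'$ disjoint from $L$, $\mathcal{N}\setminus H\approx(\mathcal{N}|\mathcal{N}')\setminus(H\setminus H')$. The relation $R$: $M\,R\,M'$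 iff there exist $w\in L^*$ and $w'\in(L\cup H)^*$ with $M_0[w\rangle M$, $M_0[w'\rangle M'$, and $w$ the projection of $w'$ onto $L^*$. *)

From mathcomp Require Import all_boot.
Set Implicit Arguments. Unset Strict Implicit. Unset Printing Implicit Defensive.

(* F(p,t) = pre p t, F(t,p) = post t p (values for t outside ntrans are
   irrelevant). *)
Record pt_net (P : finType) (Tr : eqType) := PTNet {
  ntrans : seq Tr;
  pre : P -> Tr -> nat;
  post : Tr -> P -> nat }.

Definition marking (P : finType) := {ffun P -> nat}.

Section Nets.
Variables (Tr : eqType).

Definition fire (P : finType) (N : pt_net P Tr) (M : marking P) (t : Tr)
    (M' : marking P) : Prop :=
  [/\ t \in ntrans N, (forall p, pre N p t <= M p) &
      M' = [ffun p => M p - pre N p t + post N t p]].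

Fixpoint fire_seq (P : finType) (N : pt_net P Tr) (M : marking P) (s : seq Tr)
    (M' : marking P) : Prop :=
  match s with
  | [::] => M' = M
  | t :: s' => exists M1, fire N M t M1 /\ fire_seq N M1 s' M'
  end.

Definition reachable (P : finType) (N : pt_net P Tr) (M0 M : marking P) :=
  exists s, fire_seq N M0 s M.

Definition delete (P : finType) (N : pt_net P Tr) (H : pred Tr) : pt_net P Tr :=
  PTNet [seq t <- ntrans N | ~~ H t] (pre N) (post N).

(* Parallel composition N1 | N2 of nets with disjoint places P1 + P2;
   shared transitions synchronise, arcs inherited from each component. *)
Definition compose (P1 P2 : finType) (N1 : pt_net P1 Tr) (N2 : pt_net P2 Tr)
    : pt_net (P1 + P2)%type Tr :=
  PTNet (ntrans N1 ++ ntrans N2)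
    (fun x t => match x with
                | inl p => if t \in ntrans N1 then pre N1 p t else 0
                | inr p => if t \in ntrans N2 then pre N2 p t else 0 end)
    (fun t x => match x with
                | inl p => if t \in ntrans N1 then post N1 t p else 0
                | inr p => if t \in ntrans N2 then post N2 t p else 0 end).

Definition compose_marking (P1 P2 : finType) (M1 : marking P1) (M2 : marking P2)
    : marking (P1 + P2)%type :=
  [ffun x => match x with inl p => M1 p | inr p => M2 p end].

Definition tau_step (P : finType) (L : pred Tr) (N : pt_net P Tr)
    (M M' : marking P) : Prop :=
  exists t, ~~ L t /\ fire N M t M'.

Inductive tau_steps (P : finType) (L : pred Tr) (N : pt_net P Tr)
    : marking P -> marking P -> Prop :=
  | tau_refl M : tau_steps L N M M
  | tau_cons M M1 M' : tau_step L N M M1 -> tau_steps L N M1 M' ->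
      tau_steps L N M M'.

Definition weak_sim_step (P1 P2 : finType) (L : pred Tr)
    (N1 : pt_net P1 Tr) (N2 : pt_net P2 Tr)
    (B : marking P1 -> marking P2 -> Prop) : Prop :=
  forall M M', B M M' ->
  (forall l M1, L l -> fire N1 M l M1 ->
     exists M'a M'b M'c, [/\ tau_steps L N2 M' M'a, fire N2 M'a l M'b,
                             tau_steps L N2 M'b M'c & B M1 M'c]) /\
  (forall h M1, ~~ L h -> fire N1 M h M1 ->
     exists M'c, tau_steps L N2 M' M'c /\ B M1 M'c).

(* weak bisimilarity of net systems (N1, M01) and (N2, M02),
   L = observable transitions *)
Definition weak_bisim (P1 P2 : finType) (L : pred Tr)
    (N1 : pt_net P1 Tr) (M01 : marking P1)
    (N2 : pt_net P2 Tr) (M02 : marking P2) : Prop :=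
  exists B : marking P1 -> marking P2 -> Prop,
    [/\ (forall M M', B M M' -> reachable N1 M01 M /\ reachable N2 M02 M'),
        B M01 M02,
        weak_sim_step L N1 N2 B &
        weak_sim_step L N2 N1 (fun M' M => B M M')].

Definition BNDC (P : finType) (N : pt_net P Tr) (M0 : marking P)
    (L H : pred Tr) : Prop :=
  forall (P' : finType) (N' : pt_net P' Tr) (M0' : marking P'),
    (forall t, t \in ntrans N' -> ~~ L t) ->
    weak_bisim L (delete N H) M0
      (delete (compose N N') (fun t => H t && (t \notin ntrans N')))
      (compose_marking M0 M0').

Definition lang (P : finType) (N : pt_net P Tr) (L : pred Tr)
    (M : marking P) (s : seq Tr) : Prop :=
  all L s /\ exists M', fire_seq N M s M'.

Definition relR (P : finType) (N : pt_net P Tr) (M0 : marking P)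
    (L H : pred Tr) (M M' : marking P) : Prop :=
  exists w w', [/\ all L w, all (fun t => L t || H t) w',
    fire_seq N M0 w M, fire_seq N M0 w' M' & w = [seq t <- w' | L t]].

End Nets.

From mathcomp Require Import all_boot.
Set Implicit Arguments. Unset Strict Implicit. Unset Printing Implicit Defensive.

(* If M1 R M2 is witnessed by a run w' of N, let the environment be a net
   holding one token for each occurrence of a high-level transition in w'.
   The composed system can replay w' up to M2 and is then exhausted: it has no
   unobservable moves left, and neither has N \ H.  A weak bisimulation between
   the two then relates M1 to the exhausted copy of M2, and without
   unobservable moves bisimilar markings have the same low-level language.
   Conversely, if R-related markings have the same low-level language, relate
   a marking of N \ H and one of N | N' whenever they are reached by runs with
   the same low-level projection.  The N-part of the latter is R-related to the
   former, so both enable the same low-level transitions; unobservable moves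
   of N | N' are matched by standing still. *)

Section Firing.
Variables (Tr : eqType) (P : finType) (N : pt_net P Tr).

Lemma fire_seq_rcons M s t M1 M2 :
  fire_seq N M s M1 -> fire N M1 t M2 -> fire_seq N M (rcons s t) M2.
Proof.
elim: s M => [|u s IHs] M /=; first by move=> -> ?; exists M2.
by case=> M' [Mu Ms] ?; exists M'; split=> //; apply: IHs.
Qed.

Lemma fire_seq_det M s M1 M2 :
  fire_seq N M s M1 -> fire_seq N M s M2 -> M1 = M2.
Proof.
elim: s M => [|t s IHs] M /=; first by move=> -> ->.
by case=> ? [[_ _ ->] Ms1] [? [[_ _ ->] Ms2]]; apply: IHs Ms1 Ms2.
Qed.

Lemma fire_seq_sub M s M' : fire_seq N M s M' -> {subset s <= ntrans N}.
Proof.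
elim: s M => [|t s IHs] M //= [M1 [[tN _ _] Ms]] u.
by rewrite inE => /predU1P[->|/(IHs _ Ms)].
Qed.

Lemma fire_delete H M t M' :
  fire (delete N H) M t M' <-> fire N M t M' /\ ~~ H t.
Proof.
rewrite /fire /= mem_filter; split; first by case=> /andP[-> ?] ? ->.
by case=> [[tN ? ->] Ht]; rewrite Ht tN.
Qed.

Lemma fire_seq_delete H M s M' :
  fire_seq (delete N H) M s M' <-> fire_seq N M s M' /\ all (predC H) s.
Proof.
elim: s M => [|t s IHs] M /=; first by split=> [|[]].
split=> [[M1 [/fire_delete[Mt Ht] /IHs[Ms Hs]]]|[[M1 [Mt Ms]] /andP[Ht Hs]]].
  by rewrite Ht; split=> //; exists M1.
by exists M1; split; [apply/fire_delete | apply/IHs].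
Qed.

Lemma tau_step_observable (L : pred Tr) M M' :
  {subset ntrans N <= L} -> ~ tau_step L N M M'.
Proof. by move=> NL [t [/negP Lt [/NL tL _ _]]]; apply: Lt. Qed.

Lemma lang1 (L : pred Tr) M l :
  lang N L M [:: l] <-> L l /\ exists M', fire N M l M'.
Proof.
rewrite /lang /= andbT; split=> [[Ll [_ [M' [Ml _]]]]|[Ll [M' Ml]]].
  by split=> //; exists M'.
by split=> //; exists M', M'.
Qed.

Definition local_fire M t M' := if t \in ntrans N then fire N M t M' else M' = M.

Lemma local_fire_eq M t M' :
  local_fire M t M' <->
  (t \in ntrans N -> forall p, pre N p t <= M p) /\
  M' = [ffun p => M p - (if t \in ntrans N then pre N p t else 0)
                      + (if t \in ntrans N then post N t p else 0)].
Proof.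
rewrite /local_fire; case: ifP => tN.
  by split=> [[_ ? ->]|[Nt ->]]; split=> //; apply: Nt.
have -> : [ffun p => M p - 0 + 0] = M by apply/ffunP=> p; rewrite ffunE subn0 addn0.
by split=> [->|[]].
Qed.

End Firing.

Section Composition.
Variables (Tr : eqType) (P P' : finType) (N : pt_net P Tr) (N' : pt_net P' Tr).

Definition marking_inl (X : marking (P + P')%type) : marking P := [ffun p => X (inl p)].
Definition marking_inr (X : marking (P + P')%type) : marking P' := [ffun p => X (inr p)].

Lemma marking_inl_compose M M' : marking_inl (compose_marking M M') = M.
Proof. by apply/ffunP=> p; rewrite !ffunE. Qed.

Lemma marking_inr_compose M M' : marking_inr (compose_marking M M') = M'.
Proof. by apply/ffunP=> p; rewrite !ffunE. Qed.

Lemma fire_compose X t Y :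
  fire (compose N N') X t Y <->
  [/\ t \in ntrans N ++ ntrans N',
      local_fire N (marking_inl X) t (marking_inl Y) &
      local_fire N' (marking_inr X) t (marking_inr Y)].
Proof.
split.
  case=> tNN' Xt ->; split=> //; apply/local_fire_eq.
  - split=> [tN p|]; first by have := Xt (inl p); rewrite /= tN ffunE.
    by apply/ffunP=> p; rewrite !ffunE.
  - split=> [tN p|]; first by have := Xt (inr p); rewrite /= tN ffunE.
    by apply/ffunP=> p; rewrite !ffunE.
case=> tNN' /local_fire_eq[Xl El] /local_fire_eq[Xr Er].
split=> // [[p|p]|] /=.
- by case: ifP => // tN; have := Xl tN p; rewrite ffunE.
- by case: ifP => // tN; have := Xr tN p; rewrite ffunE.
apply/ffunP=> -[p|p].
- by move/ffunP/(_ p): El; rewrite !ffunE.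
- by move/ffunP/(_ p): Er; rewrite !ffunE.
Qed.

Lemma fire_seq_compose_inl X s Y :
  fire_seq (compose N N') X s Y ->
  fire_seq N (marking_inl X) [seq t <- s | t \in ntrans N] (marking_inl Y).
Proof.
elim: s X => [|t s IHs] X /=; first by move=> ->.
case=> X1 [/fire_compose[_ Xl _] /IHs Xs]; move: Xl; rewrite /local_fire.
by case: ifP => _ Xl; [exists (marking_inl X1) | rewrite -Xl].
Qed.

End Composition.

Section Budget.
Variables (Tr : eqType) (hs : seq Tr).

(* Place [i] stores the pending firings of [hs`_i]; repeated transitions of
   [hs] all draw on the place of their first occurrence. *)
Definition budget_net : pt_net 'I_(size hs) Tr :=
  PTNet hs (fun (i : 'I_(size hs)) t => nat_of_bool (index t hs == i)) (fun _ _ => 0).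

Definition budget (u : seq Tr) : marking 'I_(size hs) :=
  [ffun i : 'I_(size hs) => count (fun t => index t hs == i) u].

Lemma fire_budget t u : t \in hs -> fire budget_net (budget (t :: u)) t (budget u).
Proof.
move=> ths; split=> // [i|]; first by rewrite ffunE leq_addr.
by apply/ffunP=> i; rewrite !ffunE /= addn0 addKn.
Qed.

Lemma budget_nil_dead t M : t \in hs -> ~ fire budget_net (budget [::]) t M.
Proof.
rewrite -index_mem => ths [_ /(_ (Ordinal ths))].
by rewrite ffunE /= eqxx.
Qed.

End Budget.

Section WeakSimulation.
Variables (Tr : eqType) (L : pred Tr) (P1 P2 : finType).
Variables (N1 : pt_net P1 Tr) (N2 : pt_net P2 Tr).
Variables (B : marking P1 -> marking P2 -> Prop) (S : marking P2 -> Prop).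
Hypothesis simB : weak_sim_step L N1 N2 B.
Hypothesis S_fire : forall M t M', S M -> fire N2 M t M' -> S M'.
Hypothesis S_no_tau : forall M M', S M -> ~ tau_step L N2 M M'.

Lemma tau_steps_stable M M' : S M -> tau_steps L N2 M M' -> M' = M.
Proof.
move=> SM Ts; case: Ts SM => // ? ? ? St _ SM.
by case: (S_no_tau SM St).
Qed.

Lemma weak_sim_fire_seq M M' v Y : B M M' -> S M' -> fire_seq N1 M v Y ->
  exists Y', [/\ fire_seq N2 M' [seq t <- v | L t] Y', B Y Y' & S Y'].
Proof.
elim: v M M' => [|t v IHv] M M' BM SM' /=; first by move=> ->; exists M'.
case=> M1 [Mt Mv]; have [simL simH] := simB BM.
case: (boolP (L t)) => Lt.
- have [Ma [Mb [Mc [Ta Mab Tc BMc]]]] := simL t M1 Lt Mt.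
  rewrite (tau_steps_stable SM' Ta) in Mab.
  have SMb := S_fire SM' Mab.
  rewrite (tau_steps_stable SMb Tc) in BMc.
  have [Y' [? ? ?]] := IHv _ _ BMc SMb Mv.
  by exists Y'; split=> //; exists Mb.
- have [Mc [Tc BMc]] := simH t M1 Lt Mt.
  rewrite (tau_steps_stable SM' Tc) in BMc.
  exact: IHv BMc SM' Mv.
Qed.

Lemma weak_sim_lang M M' s : B M M' -> S M' -> lang N1 L M s -> lang N2 L M' s.
Proof.
move=> BM SM' [Ls [Y Ms]]; split=> //.
have [Y' [Ms' _ _]] := weak_sim_fire_seq BM SM' Ms.
by exists Y'; rewrite -(all_filterP Ls).
Qed.

End WeakSimulation.

Section TwoLevel.
Variables (Tr : eqType) (P : finType) (N : pt_net P Tr) (M0 : marking P).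
Variables (L H : pred Tr).
Hypothesis N_low_high : forall t, t \in ntrans N <-> L t \/ H t.
Hypothesis low_high_disjoint : forall t, ~ (L t /\ H t).

Local Notation ND := (delete N H).

Definition relR_lang_invariant : Prop :=
  forall M1 M2, reachable ND M0 M1 -> reachable N M0 M2 ->
    relR N M0 L H M1 M2 -> forall s, lang ND L M1 s <-> lang ND L M2 s.

Lemma low_not_high t : L t -> ~~ H t.
Proof. by move=> Lt; apply/negP=> Ht; apply: (low_high_disjoint (conj Lt Ht)). Qed.

Lemma high_not_low t : H t -> ~~ L t.
Proof. by move=> Ht; apply/negP=> Lt; apply: (low_high_disjoint (conj Lt Ht)). Qed.

Lemma delete_high_observable : {subset ntrans ND <= L}.
Proof.
move=> t; rewrite mem_filter => /andP[Ht /N_low_high[] //].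
by rewrite (negbTE Ht).
Qed.

Lemma delete_high_no_tau M M' : ~ tau_step L ND M M'.
Proof. exact: tau_step_observable delete_high_observable. Qed.

Section Budgeted.
Variables (hs : seq Tr).
Hypothesis hs_high : {subset hs <= H}.

Local Notation D := (delete (compose N (budget_net hs)) (fun t => H t && (t \notin hs))).
Local Notation Z := (budget hs [::]).

Lemma fire_seq_replay Ma v Mb :
  fire_seq N Ma v Mb -> {subset [seq t <- v | H t] <= hs} ->
  fire_seq D (compose_marking Ma (budget hs [seq t <- v | H t])) v
             (compose_marking Mb Z).
Proof.
elim: v Ma => [|t v IHv] Ma /=; first by move=> ->.
case=> Ma1 [Mat Mav] vhs; exists (compose_marking Ma1 (budget hs [seq t <- v | H t])).
split; last first.
  apply: IHv Mav _ => u uv; apply: vhs.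
  by case: (H t); rewrite // inE uv orbT.
have Hths : H t -> t \in hs by move=> Ht; apply: vhs; rewrite Ht mem_head.
have [tN _ _] := Mat.
apply/fire_delete; split; last by case: (boolP (H t)) => //= /Hths ->.
apply/fire_compose; rewrite !marking_inl_compose !marking_inr_compose.
split; first by rewrite mem_cat tN.
- by rewrite /local_fire tN.
rewrite /local_fire /=; case: (boolP (H t)) => Ht.
  by rewrite Hths //; apply: fire_budget; apply: Hths.
by case: ifP => // /hs_high Ht'; case/negP: Ht.
Qed.

Lemma fire_exhausted X t Y :
  marking_inr X = Z -> fire D X t Y ->
  [/\ L t, fire ND (marking_inl X) t (marking_inl Y) & marking_inr Y = Z].
Proof.
move=> XZ /fire_delete[/fire_compose[tNhs XYl XYr] Kt].
have ths : t \notin hs.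
  by apply/negP=> ths; move: XYr; rewrite /local_fire ths XZ; apply: budget_nil_dead.
move: XYr; rewrite /local_fire (negbTE ths) XZ => YZ.
have tN : t \in ntrans N by move: tNhs; rewrite mem_cat (negbTE ths) orbF.
have Ht : ~~ H t by move: Kt; rewrite ths andbT.
move: XYl; rewrite /local_fire tN => XYl.
split=> //; last exact/fire_delete.
by case/N_low_high: tN => // Ht'; rewrite Ht' in Ht.
Qed.

Lemma exhausted_fire X t Y : marking_inr X = Z -> fire D X t Y -> marking_inr Y = Z.
Proof. by move=> XZ /(fire_exhausted XZ)[]. Qed.

Lemma exhausted_no_tau X Y : marking_inr X = Z -> ~ tau_step L D X Y.
Proof. by move=> XZ [t [/negP Lt /(fire_exhausted XZ)[]]]. Qed.

Lemma lang_exhausted X s :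
  marking_inr X = Z -> lang D L X s -> lang ND L (marking_inl X) s.
Proof.
move=> XZ [Ls [Y XsY]]; split=> //.
elim: s X XZ Ls XsY => [|t s IHs] X XZ /= Ls; first by exists (marking_inl X).
case=> X1 [/(fire_exhausted XZ)[_ Xt X1Z] X1s].
have [Y' X1sY'] := IHs _ X1Z (andP Ls).2 X1s.
by exists Y', (marking_inl X1).
Qed.

Lemma lang_replay M s : lang ND L M s -> lang D L (compose_marking M Z) s.
Proof.
move=> [Ls [Y /fire_seq_delete[MsY sH]]]; split=> //.
have sH0 : [seq t <- s | H t] = [::].
  by apply/eqP/negPn; rewrite -has_filter -all_predC.
exists (compose_marking Y Z).
by have := fire_seq_replay MsY; rewrite sH0; apply.
Qed.

End Budgeted.

Lemma bndc_relR_lang_invariant : BNDC N M0 L H -> relR_lang_invariant.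
Proof.
move=> bndc M1 M2 _ _ [w [w' [_ _ M0w M0w' ew]]]; subst w.
set hs := [seq t <- w' | H t].
have hs_high : {subset hs <= H} by move=> t; rewrite mem_filter => /andP[].
have [B [_ B0 simB simB']] := bndc _ (budget_net hs) (budget hs hs)
  (fun t ths => high_not_low (hs_high t ths)).
have ND_stable M t M' : True -> fire ND M t M' -> True by [].
have ND_no_tau M M' : True -> ~ tau_step L ND M M'.
  by move=> _; apply: delete_high_no_tau.
have [M1' [M0w1 BM1 _]] := weak_sim_fire_seq simB' ND_stable ND_no_tau B0 I
  (fire_seq_replay hs_high M0w' (fun t => id)).
have {M1' M0w1 BM1} BM12 : B M1 (compose_marking M2 (budget hs [::])).
  by case/fire_seq_delete: M0w1 => M0w1 _; rewrite -(fire_seq_det M0w1 M0w).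
move=> s; split=> M12s.
- rewrite -[M2](marking_inl_compose M2 (budget hs [::])).
  apply: lang_exhausted (marking_inr_compose _ _) _.
  exact: (weak_sim_lang simB (@exhausted_fire hs) (@exhausted_no_tau hs))
    BM12 (marking_inr_compose _ _) M12s.
- apply: (weak_sim_lang simB' ND_stable ND_no_tau) BM12 I _.
  exact: lang_replay.
Qed.

Section Environment.
Variables (P' : finType) (N' : pt_net P' Tr) (M0' : marking P').
Hypothesis N'_unobservable : forall t, t \in ntrans N' -> ~~ L t.
Hypothesis invR : relR_lang_invariant.

Local Notation D := (delete (compose N N') (fun t => H t && (t \notin ntrans N'))).
Local Notation X0 := (compose_marking M0 M0').

Lemma low_not_in_env t : L t -> t \notin ntrans N'.
Proof. by move=> Lt; apply/negP=> /N'_unobservable; rewrite Lt. Qed.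

Lemma fire_low_compose X t Y :
  L t -> fire D X t Y <->
  fire ND (marking_inl X) t (marking_inl Y) /\ marking_inr Y = marking_inr X.
Proof.
move=> Lt; have tN' := low_not_in_env Lt; have Ht := low_not_high Lt.
split.
  case/fire_delete=> /fire_compose[tNN' XYl XYr] _.
  move: XYr; rewrite /local_fire (negbTE tN') => ->; split=> //.
  have tN : t \in ntrans N by move: tNN'; rewrite mem_cat (negbTE tN') orbF.
  by move: XYl; rewrite /local_fire tN => XYl; apply/fire_delete.
case=> /fire_delete[XYl _] XYr; have [tN _ _] := XYl.
apply/fire_delete; split; last by rewrite (negbTE Ht).
apply/fire_compose; split; first by rewrite mem_cat tN.
  by rewrite /local_fire tN.
by rewrite /local_fire (negbTE tN').
Qed.

Definition low_trace_rel M X :=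
  exists v, fire_seq ND M0 [seq t <- v | L t] M /\ fire_seq D X0 v X.

Lemma low_trace_rel_relR M X :
  low_trace_rel M X ->
  [/\ reachable ND M0 M, reachable N M0 (marking_inl X) &
      relR N M0 L H M (marking_inl X)].
Proof.
case=> v [M0vM /fire_seq_delete[X0vX _]].
have vD := fire_seq_sub X0vX.
have := fire_seq_compose_inl X0vX; rewrite marking_inl_compose => M0vX.
set w' := [seq t <- v | t \in ntrans N] in M0vX.
have ew : [seq t <- v | L t] = [seq t <- w' | L t].
  rewrite -filter_predI; apply: eq_in_filter => t /vD tD /=.
  case: (boolP (L t)) => //= Lt; move: tD; rewrite mem_cat.
  by rewrite (negbTE (low_not_in_env Lt)) orbF.
split; [by exists [seq t <- v | L t] | by exists w' |].
exists [seq t <- v | L t], w'; split=> //.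
- exact: filter_all.
- apply/allP=> t; rewrite mem_filter => /andP[/N_low_high[] -> _] //.
  by rewrite orbT.
- by case/fire_seq_delete: M0vM.
Qed.

Lemma low_trace_rel_enabled M X l :
  low_trace_rel M X -> L l ->
  (exists M1, fire ND M l M1) <-> (exists M1, fire ND (marking_inl X) l M1).
Proof.
move=> /low_trace_rel_relR[rM rX RMX] Ll.
have [MX XM] := invR rM rX RMX [:: l].
split=> [Ml|Xl].
- by case/lang1: (MX (proj2 (lang1 _ _ _ _) (conj Ll Ml))).
- by case/lang1: (XM (proj2 (lang1 _ _ _ _) (conj Ll Xl))).
Qed.

Lemma low_trace_rel_fire_low M X l M1 X1 :
  low_trace_rel M X -> L l -> fire ND M l M1 -> fire D X l X1 ->
  low_trace_rel M1 X1.
Proof.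
case=> v [M0vM X0vX] Ll Ml Xl; exists (rcons v l).
split; last exact: fire_seq_rcons X0vX Xl.
by rewrite -cats1 filter_cat /= Ll cats1; apply: fire_seq_rcons M0vM Ml.
Qed.

Lemma low_trace_rel_fire_unobservable M X t X1 :
  low_trace_rel M X -> ~~ L t -> fire D X t X1 -> low_trace_rel M X1.
Proof.
case=> v [M0vM X0vX] Lt Xt; exists (rcons v t).
split; last exact: fire_seq_rcons X0vX Xt.
by rewrite -cats1 filter_cat /= (negbTE Lt) cats0.
Qed.

Lemma weak_bisim_delete_compose : weak_bisim L ND M0 D X0.
Proof.
exists low_trace_rel; split.
- by move=> M X [v [M0vM X0vX]]; split; [exists [seq t <- v | L t] | exists v].
- by exists [::].
- move=> M X MX; split=> [l M1 Ll Ml|t M1 Lt [/delete_high_observable tL _ _]];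
    last by case/negP: Lt.
  have [M1' XlM1'] := (low_trace_rel_enabled MX Ll).1 (ex_intro _ M1 Ml).
  set X1 := compose_marking M1' (marking_inr X).
  have XlX1 : fire D X l X1.
    by apply/(fire_low_compose _ _ Ll); rewrite marking_inl_compose marking_inr_compose.
  exists X, X1, X1; split; [constructor | exact: XlX1 | constructor |].
  exact: low_trace_rel_fire_low MX Ll Ml XlX1.
- move=> X M XM; split=> [l X1 Ll XlX1|t X1 Lt XtX1].
  + have [XlX1' _] := (fire_low_compose _ _ Ll).1 XlX1.
    have [M1 Ml] := (low_trace_rel_enabled XM Ll).2 (ex_intro _ _ XlX1').
    exists M, M1, M1; split; [constructor | exact: Ml | constructor |].
    exact: low_trace_rel_fire_low XM Ll Ml XlX1.
  + exists M; split; first by constructor.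
    exact: low_trace_rel_fire_unobservable XM Lt XtX1.
Qed.

End Environment.

Lemma relR_lang_invariant_bndc : relR_lang_invariant -> BNDC N M0 L H.
Proof. by move=> invR P' N' M0' N'_unobs; apply: weak_bisim_delete_compose. Qed.

End TwoLevel.

Theorem proposition4 (Tr : eqType) (P : finType) (N : pt_net P Tr)
    (M0 : marking P) (L H : pred Tr) :
  (forall t, t \in ntrans N <-> L t \/ H t) ->
  (forall t, ~ (L t /\ H t)) ->
  BNDC N M0 L H <->
  (forall M1 M2, reachable (delete N H) M0 M1 -> reachable N M0 M2 ->
     relR N M0 L H M1 M2 ->
     forall s, lang (delete N H) L M1 s <-> lang (delete N H) L M2 s).
Proof.
move=> N_low_high low_high_disjoint; split.
- exact: bndc_relR_lang_invariant.
- exact: relR_lang_invariant_bndc.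
Qed.
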